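(* Let $n\ge 2$ and let $R$ be the complex Leibniz algebra with basis $\{h,e_1,\dots,e_n\}$ and nonzero products $[e_i,e_1]=e_{i+1}$ ($1\le i\le n-1$), $[h,e_1]=-e_1$, $[e_i,h]=ie_i$ ($1\le i\le n$). Then $(d,D)$ is a biderivation of $R$ iff there exist $\alpha_1,\alpha_2,\beta_3,\dots,\beta_{n+1}\in\mathbb C$ such that, with the convention $e_{n+1}=0$, $$d(h)=-\alpha_1e_1,\quad d(e_i)=i\alpha_2e_i+\alpha_1e_{i+1}\ (1\le i\le n),$$ $$D(h)=-\alpha_1e_1+\sum_{i=2}^{n-1}i\beta_{i+1}e_i+\beta_{n+1}e_n,\quad D(e_1)=\alpha_2e_1-\alpha_1e_2+\sum_{i=3}^n\beta_ie_i,\quad D(e_i)=0\ (2\le i\le n).$$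
   Context: Leibniz algebras are right Leibniz over $\mathbb C$: $[x,[y,z]]=[[x,y],z]-[[x,z],y]$. Unlisted products are zero. A derivation is a linear $d$ with $d([x,y])=[d(x),y]+[x,d(y)]$; an anti-derivation is a linear $D$ with $D([x,y])=[D(x),y]-[D(y),x]$; a biderivation is a pair $(d,D)$ of a derivation and an anti-derivation with $[x,d(y)]=[x,D(y)]$ for all $x,y$. *)

From mathcomp Require Import all_boot all_algebra.
From mathcomp Require Import reals complex.
Set Implicit Arguments. Unset Strict Implicit. Unset Printing Implicit Defensive.
Import GRing.Theory Num.Theory.
Local Open Scope ring_scope.

(* The algebra R_n has basis {h, e_1, ..., e_n}; its elements are row vectors
   x : 'rV[C]_(n.+1), where coordinate 0 is the h-coefficient and coordinate
   i (1 <= i <= n) is the e_i-coefficient.  Linear maps are matrices acting on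
   the right: the image of x under f is  x *m f. *)

(* basis vector with index k (k = 0 is h, k = i is e_i); ev n (n+1) = 0,
   which realizes the convention e_{n+1} = 0. *)
Definition ev (C : ringType) (n k : nat) : 'rV[C]_(n.+1) :=
  \row_(j < n.+1) ((nat_of_ord j == k)%:R).

Definition brb (C : ringType) (n i j : nat) : 'rV[C]_(n.+1) :=
  if [&& 1 <= i, i <= n.-1 & j == 1]%N then ev C n i.+1
  else if [&& i == 0 & j == 1]%N then - ev C n 1
  else if [&& 1 <= i, i <= n & j == 0]%N then i%:R *: ev C n i
  else 0.

Definition bracket (C : ringType) (n : nat) (x y : 'rV[C]_(n.+1)) : 'rV[C]_(n.+1) :=
  \sum_(i < n.+1) \sum_(j < n.+1) (x 0 i * y 0 j) *: brb C n i j.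

Definition is_derivation (C : ringType) (n : nat) (d : 'M[C]_(n.+1)) : Prop :=
  forall x y : 'rV[C]_(n.+1),
    bracket (x *m d) y + bracket x (y *m d) = bracket x y *m d.

Definition is_antiderivation (C : ringType) (n : nat) (D : 'M[C]_(n.+1)) : Prop :=
  forall x y : 'rV[C]_(n.+1),
    bracket x y *m D = bracket (x *m D) y - bracket (y *m D) x.

Definition is_biderivation (C : ringType) (n : nat) (d D : 'M[C]_(n.+1)) : Prop :=
  [/\ is_derivation d, is_antiderivation D &
      forall x y : 'rV[C]_(n.+1), bracket x (y *m d) = bracket x (y *m D)].

From mathcomp Require Import all_boot all_algebra.
From mathcomp Require Import reals complex.
From mathcomp Require Import ring zify.
Import GRing.Theory Num.Theory.
Local Open Scope ring_scope.

(* Only h and e_1 act nontrivially on the right, so with R_h and R_e1 the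
   matrices of right multiplication by h and e_1 every bracket reads
   [x, y] = y_h (x R_h) + y_e1 (x R_e1).  The derivation identity for y = h
   says that d commutes with R_h = diag(0, 1, ..., n) up to a combination of
   R_h and R_e1; as the eigenvalues are distinct, d is supported on the
   diagonal and superdiagonal, with constant superdiagonal -a1, and the
   identity for y = e_1 makes its diagonal grow linearly, i d_11.  The
   antiderivation identity for x = h kills the rows e_2, ..., e_n of D and
   ties its h-row to its e_1-row, while [x, d y] = [x, D y] for x = e_1 makes
   the h- and e_1-columns of d and D agree.  Conversely, for d and D of this
   shape all three identities reduce to commutation relations between d, D
   and R_h, R_e1, which are checked on basis vectors. *)

Section Biderivations.
Variables (C : numFieldType) (n : nat).
Hypothesis n_ge2 : (1 < n)%N.
Let n_gt0 : (0 < n)%N := ltnW n_ge2.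

Local Notation V := 'rV[C]_(n.+1).
Local Notation e := (ev C n).

(* meaningful only for k <= n: out of range, inord k is the h-coordinate *)
Definition vcoef (u : V) (k : nat) : C := u 0 (inord k).

Lemma vcoef_ev k p : (k <= n)%N -> vcoef (e p) k = (k == p)%:R.
Proof. by move=> hk; rewrite /vcoef mxE inordK. Qed.

Lemma vcoef_ev0 p : vcoef (e p) 0 = (p == 0%N)%:R.
Proof. by rewrite vcoef_ev // eq_sym. Qed.

Lemma vcoef_ev1 p : vcoef (e p) 1 = (p == 1%N)%:R.
Proof. by rewrite vcoef_ev 1?eq_sym. Qed.

Lemma eq_row_vcoef (u v : V) :
  (forall k, (k <= n)%N -> vcoef u k = vcoef v k) -> u = v.
Proof.
move=> Huv; apply/rowP => j; have := Huv j (leq_ord j).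
by rewrite /vcoef inord_val.
Qed.

Lemma vcoefD u v k : vcoef (u + v) k = vcoef u k + vcoef v k.
Proof. by rewrite /vcoef mxE. Qed.
Lemma vcoefB u v k : vcoef (u - v) k = vcoef u k - vcoef v k.
Proof. by rewrite /vcoef !mxE. Qed.
Lemma vcoefN u k : vcoef (- u) k = - vcoef u k.
Proof. by rewrite /vcoef mxE. Qed.
Lemma vcoefZ a u k : vcoef (a *: u) k = a * vcoef u k.
Proof. by rewrite /vcoef mxE. Qed.
Lemma vcoef0 k : vcoef 0 k = 0.
Proof. by rewrite /vcoef mxE. Qed.
Lemma vcoef_sum m p (F : nat -> V) k :
  vcoef (\sum_(m <= i < p) F i) k = \sum_(m <= i < p) vcoef (F i) k.
Proof. by rewrite /vcoef summxE. Qed.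

Lemma natr_false : (false%:R : C) = 0. Proof. by []. Qed.
Lemma natr_true : (true%:R : C) = 1. Proof. by []. Qed.

Lemma ev_out p : (n < p)%N -> e p = 0.
Proof.
move=> hp; apply/rowP => j; rewrite !mxE.
by rewrite ltn_eqF // (leq_trans (ltn_ord j) hp).
Qed.

Lemma sum_nat_delta m p k (c : nat -> C) :
  \sum_(m <= i < p) c i * (k == i)%:R = if (m <= k < p)%N then c k else 0.
Proof.
elim: p => [|p IH]; first by rewrite big_geq // ltn0 andbF.
have [hmp|hpm] := leqP m p; last by rewrite big_geq //; case: ifP => //; lia.
rewrite big_nat_recr //= IH.
have [->|hkp] := eqVneq k p; first by rewrite hmp ltnSn ltnn andbF mulr1 add0r.
by rewrite mulr0 addr0; case: ifP; case: ifP => //; move: hkp => /eqP; lia.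
Qed.

Lemma sum_ord_delta (F : 'I_n.+1 -> C) m : (m <= n)%N ->
  \sum_(l < n.+1) F l * ((l : nat) == m)%:R = F (inord m).
Proof.
move=> hm; rewrite (bigD1 (inord m)) //= inordK // eqxx mulr1 big1 ?addr0 //.
move=> l hl; case: eqP; rewrite ?mulr0 // => hlm.
by move: hl; rewrite -val_eqE /= inordK // hlm eqxx.
Qed.

Lemma vcoef_mul (u : V) M k : (k <= n)%N ->
  vcoef (u *m M) k = \sum_(j < n.+1) vcoef u j * M j (inord k).
Proof. by move=> hk; rewrite /vcoef mxE; apply: eq_bigr => j _; rewrite inord_val. Qed.

Lemma vcoef_sum_ev m p (c : nat -> C) k : (k <= n)%N ->
  vcoef (\sum_(m <= i < p) c i *: e i) k = if (m <= k < p)%N then c k else 0.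
Proof.
by move=> hk; rewrite vcoef_sum -sum_nat_delta; apply: eq_bigr => i _; rewrite vcoefZ vcoef_ev.
Qed.

Lemma natr_eigen_eq0 (x : C) k a : k != a -> x * k%:R = a%:R * x -> x = 0.
Proof.
move=> hka H; have : x * (k%:R - a%:R) = 0 by rewrite mulrBr H mulrC subrr.
by move/eqP; rewrite mulf_eq0 subr_eq0 eqr_nat (negbTE hka) orbF => /eqP.
Qed.

Definition Rh : 'M[C]_(n.+1) := \matrix_(i, j) ((i == j :> nat)%:R * (i : nat)%:R).
Definition Re1 : 'M[C]_(n.+1) := \matrix_(i, j)
  (if ((i : nat) == 0%N) && ((j : nat) == 1%N) then -1
   else if (1 <= i)%N && ((j : nat) == i.+1) then 1 else 0).

Lemma vcoef_Rh (u : V) k : (k <= n)%N -> vcoef (u *m Rh) k = vcoef u k * k%:R.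
Proof.
move=> hk; rewrite vcoef_mul //.
rewrite (eq_bigr (fun l : 'I_n.+1 => (vcoef u l * (l : nat)%:R) * ((l : nat) == k)%:R)).
  rewrite (sum_ord_delta (fun l : 'I_n.+1 => vcoef u l * (l : nat)%:R)) //.
  by rewrite inordK // /vcoef inord_val.
by move=> l _; rewrite mxE inordK //; ring.
Qed.

Lemma vcoef_Re1 (u : V) k : (k <= n)%N -> vcoef (u *m Re1) k =
  if k == 1%N then - vcoef u 0 else if (2 <= k)%N then vcoef u k.-1 else 0.
Proof.
move=> hk; rewrite vcoef_mul //.
rewrite (eq_bigr (fun l : 'I_n.+1 =>
           (- (k == 1%N)%:R * vcoef u l) * ((l : nat) == 0%N)%:R
           + ((2 <= k)%N%:R * vcoef u l) * ((l : nat) == k.-1)%:R)); last first.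
  move=> [l hl] _; rewrite mxE inordK //=.
  have [->|hl0] := eqVneq l 0%N.
    have [->|hk1] := eqVneq k 1%N; first by rewrite /=; ring.
    by case: k hk hk1 => [|[|k]] //= _ _; ring.
  have [->|hkl] := eqVneq k l.+1.
    rewrite lt0n hl0 /= eqxx (_ : l.+1 == 1%N = false); last by case: l hl0 {hl}.
    by rewrite (_ : (1 < l.+1)%N) /=; [ring | rewrite ltnS lt0n].
  rewrite andbF; have [hlk|hlk] := eqVneq l k.-1; last by rewrite /=; ring.
  by rewrite (_ : (1 < k)%N = false) /=; [ring | lia].
rewrite big_split /= !sum_ord_delta //; last by lia.
rewrite !inordK //; last by lia.
have [->|hk1] := eqVneq k 1%N; first by rewrite /= mul0r addr0 mulN1r.
by rewrite oppr0 mul0r add0r; case: ifP => _ /=; rewrite ?mul1r ?mul0r.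
Qed.

Lemma ev_Rh p : e p *m Rh = p%:R *: e p.
Proof.
apply: eq_row_vcoef => k hk; rewrite vcoef_Rh // vcoefZ vcoef_ev //.
by have [->|_] := eqVneq k p; rewrite ?mulr1 ?mul1r ?mul0r ?mulr0.
Qed.

Lemma ev_Re1 p : e p *m Re1 = if p == 0%N then - e 1 else e p.+1.
Proof.
apply: eq_row_vcoef => k hk; rewrite vcoef_Re1 //.
by case: p => [|p] /=; rewrite ?vcoefN !vcoef_ev //; try lia;
  case: k hk => [|[|k]] hk //=; rewrite ?oppr0.
Qed.

Lemma ev0_Re1 : e 0 *m Re1 = - e 1. Proof. by rewrite ev_Re1. Qed.
Lemma evS_Re1 p : e p.+1 *m Re1 = e p.+2. Proof. by rewrite ev_Re1. Qed.

Lemma brb_entry (i l j : 'I_n.+1) :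
  brb C n i l 0 j = ((l : nat) == 0%N)%:R * Rh i j + ((l : nat) == 1%N)%:R * Re1 i j.
Proof.
rewrite /Rh /Re1 !mxE.
case: i => i hi; case: l => l hl; case: j => j hj /=.
rewrite /brb.
case: l hl => [|[|l]] hl /=; rewrite ?andbF ?andbT ?mul0r ?mul1r ?add0r ?addr0.
- case: ifP => h; rewrite !mxE /=.
  + have [->|ne] := eqVneq i j; first by rewrite /= mulr1 mul1r.
    by rewrite /= mulr0 mul0r.
  + have [eij|ne] := eqVneq i j; last by rewrite mul0r.
    by rewrite (_ : i = 0%N) ?mulr0 //; lia.
- case: ifP => h1; rewrite ?mxE /=.
  + rewrite (_ : (i == 0%N) = false) /=; last by lia.
    have [_|hj1] := eqVneq j i.+1; last by case: ifP => //; lia.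
    by rewrite (_ : (0 < i)%N) //; lia.
  + have [->|hi0] := eqVneq i 0%N.
      by rewrite !mxE /=; case: (j == 1%N) => /=; rewrite ?oppr0.
    by rewrite mxE; case: ifP => //; lia.
- by rewrite mxE.
Qed.

Lemma bracketE (x y : V) :
  bracket x y = vcoef y 0 *: (x *m Rh) + vcoef y 1 *: (x *m Re1).
Proof.
apply/rowP => j; rewrite /bracket summxE.
have y_coord m : (m <= n)%N -> \sum_(l < n.+1) y 0 l * ((l : nat) == m)%:R = vcoef y m.
  by move=> hm; rewrite (sum_ord_delta (fun l => y 0 l)).
rewrite (eq_bigr (fun i : 'I_n.+1 =>
           x 0 i * Rh i j * vcoef y 0 + x 0 i * Re1 i j * vcoef y 1)); last first.
  move=> i _; rewrite summxE.
  rewrite (eq_bigr (fun l : 'I_n.+1 => x 0 i * Rh i j * (y 0 l * ((l : nat) == 0%N)%:R)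
                 + x 0 i * Re1 i j * (y 0 l * ((l : nat) == 1%N)%:R))); last first.
    by move=> l _; rewrite mxE brb_entry; ring.
  by rewrite big_split /= -!mulr_sumr !y_coord //; lia.
rewrite big_split /= !mxE -!mulr_suml !mulr_sumr.
by rewrite mulrC [X in _ + X = _]mulrC !mulr_sumr.
Qed.

Section Necessity.
Variables d D : 'M[C]_(n.+1).
Hypothesis dD_bider : is_biderivation d D.

Local Notation dd a k := (vcoef (e a *m d) k).
Local Notation DD a k := (vcoef (e a *m D) k).

Lemma derivation_h a k : (k <= n)%N ->
  dd a k * k%:R + dd 0 0 * vcoef (e a *m Rh) k + dd 0 1 * vcoef (e a *m Re1) k
  = a%:R * dd a k.
Proof.
move=> hk; case: dD_bider => d_der _ _.
have := congr1 (vcoef^~ k) (d_der (e a) (e 0)).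
rewrite !bracketE !vcoef_ev0 !vcoef_ev1 /= !scale1r !scale0r !addr0.
by rewrite ev_Rh -scalemxAl !vcoefD !vcoefZ vcoef_Rh // addrA => ->.
Qed.

Lemma derivation_e1 a k : (k <= n)%N ->
  vcoef (e a *m d *m Re1) k + dd 1 0 * vcoef (e a *m Rh) k
    + dd 1 1 * vcoef (e a *m Re1) k
  = vcoef (e a *m Re1 *m d) k.
Proof.
move=> hk; case: dD_bider => d_der _ _.
have := congr1 (vcoef^~ k) (d_der (e a) (e 1)).
by rewrite !bracketE !vcoef_ev0 !vcoef_ev1 /= !scale1r !scale0r !add0r !vcoefD !vcoefZ addrA.
Qed.

Lemma antiderivation_h_high b k : (2 <= b)%N -> (k <= n)%N -> DD b k * k%:R = 0.
Proof.
move=> hb hk; case: dD_bider => _ D_anti _.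
have := congr1 (vcoef^~ k) (D_anti (e 0) (e b)).
rewrite !bracketE !vcoef_ev0 !vcoef_ev1 (_ : (b == 0%N) = false) 1?(_ : (b == 1%N) = false);
  try lia.
rewrite /= !scale0r !addr0 mul0mx scale1r vcoef0 add0r vcoefN vcoef_Rh //.
by move/eqP; rewrite eq_sym oppr_eq0 => /eqP.
Qed.

Lemma antiderivation_h_e1 k : (k <= n)%N ->
  - DD 1 k = vcoef (e 0 *m D *m Re1) k - DD 1 k * k%:R.
Proof.
move=> hk; case: dD_bider => _ D_anti _.
have := congr1 (vcoef^~ k) (D_anti (e 0) (e 1)).
by rewrite !bracketE !vcoef_ev0 !vcoef_ev1 /= !scale0r !add0r !scale1r addr0
  ev0_Re1 mulNmx vcoefN vcoefB vcoef_Rh.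
Qed.

Lemma biderivation_low_coords a : (a <= n)%N -> dd a 0 = DD a 0 /\ dd a 1 = DD a 1.
Proof.
move=> ha; case: dD_bider => _ _ compat.
have := compat (e 1) (e a); rewrite !bracketE ev_Rh ev_Re1 /= scale1r => H.
have := congr1 (vcoef^~ 1%N) H; have := congr1 (vcoef^~ 2%N) H.
by rewrite !vcoefD !vcoefZ !vcoef_ev //= ?mulr1 ?mulr0 ?addr0 ?add0r //; lia.
Qed.

Lemma d_h_h : dd 0 0 = 0.
Proof.
have := derivation_h 1 1 n_gt0.
rewrite ev_Rh ev_Re1 /= vcoefZ !vcoef_ev //= ?mulr1n ?mulr0n !mulr1 !mulr0 !addr0 !mul1r => H.
by apply: (addrI (dd 1 1)); rewrite addr0 H.
Qed.

Lemma d_h_high k : (2 <= k)%N -> (k <= n)%N -> dd 0 k = 0.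
Proof.
move=> h2 hk; have := derivation_h 0 k hk.
rewrite d_h_h ev0_Re1 vcoefN vcoef_ev // (_ : (k == 1%N) = false); last by lia.
rewrite /= ?mulr0n !mul0r oppr0 mulr0 !addr0 => H.
by apply: (@natr_eigen_eq0 _ k 0%N); [lia | rewrite H mul0r].
Qed.

Lemma d_e_off a k : (1 <= a)%N -> (k <= n)%N -> k != a -> k != a.+1 -> dd a k = 0.
Proof.
move=> ha hk hka hka1; have := derivation_h a k hk.
rewrite d_h_h ev_Re1 (_ : (a == 0%N) = false) /=; last by lia.
rewrite vcoef_ev // (negbTE hka1) /= mulr0 mul0r !addr0.
exact: natr_eigen_eq0.
Qed.

Lemma d_e_next a : (1 <= a)%N -> (a < n)%N -> dd a a.+1 = - dd 0 1.
Proof.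
move=> ha han; have := derivation_h a a.+1 han.
rewrite d_h_h ev_Re1 (_ : (a == 0%N) = false) /=; last by lia.
rewrite vcoef_ev // eqxx /= mulr1 mul0r addr0 -natr1 => H.
have -> : dd 0 1 = dd a a.+1 * (a%:R + 1) + dd 0 1 - dd a a.+1 * (a%:R + 1) by ring.
by rewrite H; ring.
Qed.

Lemma d_e1_h : dd 1 0 = 0.
Proof.
apply: (@natr_eigen_eq0 _ 0 1) => //.
have := derivation_h 1 0 (leq0n _).
by rewrite d_h_h ev_Re1 /= vcoef_ev //= !mulr0 !mul0r !addr0 => <-.
Qed.

Lemma d_e_diag a : (1 <= a)%N -> (a <= n)%N -> dd a a = a%:R * dd 1 1.
Proof.
elim: a => [//|a IH] _ han.
have [->|ha0] := eqVneq a 0%N; first by rewrite mul1r.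
have ha : (1 <= a)%N by rewrite lt0n.
have := derivation_e1 a a.+1 han.
rewrite vcoef_Re1 // (_ : (a.+1 == 1%N) = false) /=; last by lia.
rewrite ev_Rh ev_Re1 (_ : (a == 0%N) = false) /=; last by lia.
rewrite vcoefZ !vcoef_ev // eqxx (_ : (a.+1 == a) = false) /=; last by lia.
rewrite IH // 1?(ltnW han) // (_ : (1 < a.+1)%N) /=; last by lia.
by rewrite !mulr0 addr0 mulr1 => <-; rewrite -natr1 mulrDl mul1r.
Qed.

Lemma D_high b k : (2 <= b)%N -> (b <= n)%N -> (k <= n)%N -> DD b k = 0.
Proof.
move=> hb hbn hk; have [->|hk0] := eqVneq k 0%N.
  by case: (biderivation_low_coords b hbn) => <- _; apply: d_e_off => //; lia.
have := antiderivation_h_high b k hb hk => /eqP; rewrite mulf_eq0 pnatr_eq0 (negbTE hk0).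
by rewrite orbF => /eqP.
Qed.

Lemma D_h_coord i : (1 <= i)%N -> (i < n)%N -> DD 0 i = i%:R * DD 1 i.+1.
Proof.
move=> hi hin; have := antiderivation_h_e1 i.+1 hin.
rewrite vcoef_Re1 // (_ : (i.+1 == 1%N) = false) 1?(_ : (1 < i.+1)%N) /=; try lia.
rewrite -natr1 => H.
have -> : DD 0 i = DD 0 i - DD 1 i.+1 * (i%:R + 1) + DD 1 i.+1 * (i%:R + 1) by ring.
by rewrite -H; ring.
Qed.

Definition Dbeta (i : nat) := if i == n.+1 then DD 0 n else DD 1 i.

Lemma shape_d_h : e 0 *m d = - (- dd 0 1) *: e 1.
Proof.
apply: eq_row_vcoef => k hk; rewrite vcoefZ vcoef_ev // opprK.
by case: k hk => [|[|k]] hk /=; rewrite ?mulr0 ?d_h_h ?mulr1 // d_h_high.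
Qed.

Lemma shape_d_e i : (1 <= i <= n)%N ->
  e i *m d = (i%:R * dd 1 1) *: e i + (- dd 0 1) *: e i.+1.
Proof.
move=> /andP [hi hin]; apply: eq_row_vcoef => k hk; rewrite vcoefD !vcoefZ !vcoef_ev //.
have [->|hki] := eqVneq k i.
  by rewrite (ltn_eqF (ltnSn i)) /= mulr1 mulr0 addr0 d_e_diag.
have [ek|hki1] := eqVneq k i.+1; last by rewrite /= !natr_false !mulr0 addr0 d_e_off.
by subst k; rewrite /= ?mulr1n ?mulr0n mulr1 mulr0 add0r d_e_next.
Qed.

Lemma shape_D_h : e 0 *m D = - (- dd 0 1) *: e 1
                        + \sum_(2 <= i < n) (i%:R * Dbeta i.+1) *: e i
                        + Dbeta n.+1 *: e n.
Proof.
apply: eq_row_vcoef => k hk; rewrite !vcoefD !vcoefZ vcoef_sum_ev // !vcoef_ev // opprK.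
have [->|hk0] := eqVneq k 0%N.
  case: (biderivation_low_coords 0 (leq0n _)) => <- _.
  by rewrite d_h_h /= (_ : (0 == n) = false) ?mulr0 ?addr0 //; lia.
have [->|hk1] := eqVneq k 1%N.
  case: (biderivation_low_coords 0 (leq0n _)) => _ <-.
  by rewrite /= (_ : (1 == n) = false) ?mulr0 ?addr0 ?mulr1 //; lia.
have [->|hkn] := eqVneq k n.
  by rewrite /Dbeta eqxx /= ltnn andbF natr_false mulr0 !add0r mulr1.
rewrite /= mulr0 add0r mulr0 addr0 (_ : (2 <= k < n)%N); last by lia.
by rewrite /Dbeta (_ : (k.+1 == n.+1) = false) ?D_h_coord //; lia.
Qed.

Lemma shape_D_e1 : e 1 *m D = dd 1 1 *: e 1 - (- dd 0 1) *: e 2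
                        + \sum_(3 <= i < n.+1) Dbeta i *: e i.
Proof.
apply: eq_row_vcoef => k hk; rewrite !vcoefD vcoefN !vcoefZ vcoef_sum_ev // !vcoef_ev //.
have [->|hk0] := eqVneq k 0%N.
  by case: (biderivation_low_coords 1 n_gt0) => <- _; rewrite d_e1_h /= !mulr0 oppr0 !addr0.
have [->|hk1] := eqVneq k 1%N.
  by case: (biderivation_low_coords 1 n_gt0) => _ <-; rewrite /= !mulr0 mulr1 oppr0 !addr0.
have [->|hk2] := eqVneq k 2%N.
  rewrite /= mulr0 mulr1 add0r addr0 opprK.
  have := D_h_coord 1 (leqnn _) n_ge2; rewrite mul1r => <-.
  by case: (biderivation_low_coords 0 (leq0n _)) => _ <-.
rewrite /= !mulr0 oppr0 !add0r (_ : (3 <= k < n.+1)%N); last by lia.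
by rewrite /Dbeta (_ : (k == n.+1) = false) //; lia.
Qed.

Lemma shape_D_high i : (2 <= i <= n)%N -> e i *m D = 0.
Proof.
by move=> /andP [hi hin]; apply: eq_row_vcoef => k hk; rewrite vcoef0 D_high.
Qed.

Lemma biderivation_shape : exists (a1 a2 : C) (beta : nat -> C),
  [/\ e 0 *m d = - a1 *: e 1,
      (forall i : nat, (1 <= i <= n)%N -> e i *m d = (i%:R * a2) *: e i + a1 *: e i.+1),
      e 0 *m D = - a1 *: e 1 + \sum_(2 <= i < n) (i%:R * beta i.+1) *: e i
                 + beta n.+1 *: e n,
      e 1 *m D = a2 *: e 1 - a1 *: e 2 + \sum_(3 <= i < n.+1) beta i *: e i
    & (forall i : nat, (2 <= i <= n)%N -> e i *m D = 0)].
Proof.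
exists (- dd 0 1), (dd 1 1), Dbeta.
split; [exact: shape_d_h | exact: shape_d_e | exact: shape_D_h | exact: shape_D_e1 |].
exact: shape_D_high.
Qed.

End Necessity.

Lemma ev_mul (i : 'I_n.+1) (A : 'M[C]_(n.+1)) : e i *m A = row i A.
Proof.
apply/rowP => c; rewrite !mxE.
rewrite (eq_bigr (fun j : 'I_n.+1 => A j c * ((j : nat) == i)%:R)); last first.
  by move=> j _; rewrite mxE mulrC.
by rewrite (sum_ord_delta (fun j => A j c)) ?leq_ord // inord_val.
Qed.

Lemma vcoef_ev_mul (j k : nat) (A : 'M[C]_(n.+1)) : (j <= n)%N ->
  vcoef (e j *m A) k = A (inord j) (inord k).
Proof.
move=> hj; have -> : e j = e (inord j : 'I_n.+1) by rewrite inordK.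
by rewrite ev_mul /vcoef mxE.
Qed.

Lemma eq_mx_ev (A B : 'M[C]_(n.+1)) :
  (forall p, (p <= n)%N -> e p *m A = e p *m B) -> A = B.
Proof.
by move=> HAB; apply/row_matrixP => i; rewrite -!ev_mul; apply: HAB; rewrite -ltnS.
Qed.

Lemma vcoef_mul_col01 (y : V) (M : 'M[C]_(n.+1)) c p q : (c <= n)%N ->
  (forall j, (j <= n)%N -> vcoef (e j *m M) c = (j == 0%N)%:R * p + (j == 1%N)%:R * q) ->
  vcoef (y *m M) c = vcoef y 0 * p + vcoef y 1 * q.
Proof.
move=> hc HM; rewrite vcoef_mul //.
rewrite (eq_bigr (fun j : 'I_n.+1 => (vcoef y j * p) * ((j : nat) == 0%N)%:R
                   + (vcoef y j * q) * ((j : nat) == 1%N)%:R)); last first.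
  move=> j _; rewrite -[M j _]/(M j (inord c)).
  by have := HM j (leq_ord j); rewrite vcoef_ev_mul ?leq_ord // inord_val => ->; ring.
by rewrite big_split /= !(sum_ord_delta (fun j : 'I_n.+1 => _)) // !inordK.
Qed.

Definition ev_outer (p : nat) (v : V) : 'M[C]_(n.+1) :=
  \matrix_(i, j) (((i : nat) == p)%:R * v 0 j).

Lemma mul_ev_outer p (v : V) x : (p <= n)%N -> x *m ev_outer p v = vcoef x p *: v.
Proof.
move=> hp; apply: eq_row_vcoef => k hk; rewrite vcoef_mul // vcoefZ.
rewrite (eq_bigr (fun j : 'I_n.+1 => (vcoef v k * vcoef x j) * ((j : nat) == p)%:R)).
  by rewrite sum_ord_delta // inordK // mulrC.
by move=> j _; rewrite mxE /vcoef; ring.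
Qed.

Ltac solve_coordwise :=
  apply: eq_row_vcoef => ? ?;
  rewrite ?(vcoefB, vcoefD, vcoefN, vcoefZ, vcoef0); ring.

Section Sufficiency.
Variables (d D : 'M[C]_(n.+1)) (a1 a2 : C) (beta : nat -> C).
Hypothesis d_h : e 0 *m d = - a1 *: e 1.
Hypothesis d_e : forall i : nat, (1 <= i <= n)%N ->
  e i *m d = (i%:R * a2) *: e i + a1 *: e i.+1.
Hypothesis D_h : e 0 *m D = - a1 *: e 1 + \sum_(2 <= i < n) (i%:R * beta i.+1) *: e i
                            + beta n.+1 *: e n.
Hypothesis D_e1 : e 1 *m D = a2 *: e 1 - a1 *: e 2 + \sum_(3 <= i < n.+1) beta i *: e i.
Hypothesis D_high : forall i : nat, (2 <= i <= n)%N -> e i *m D = 0.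

Lemma d_e_all i : (1 <= i)%N -> e i *m d = (i%:R * a2) *: e i + a1 *: e i.+1.
Proof.
move=> hi; have [hin|hni] := leqP i n; first by apply: d_e; rewrite hi.
by rewrite !ev_out ?mul0mx ?scaler0 ?addr0 //; lia.
Qed.

Lemma D_high_all i : (2 <= i)%N -> e i *m D = 0.
Proof.
move=> hi; have [hin|hni] := leqP i n; first by apply: D_high; rewrite hi.
by rewrite ev_out ?mul0mx.
Qed.

Lemma vcoef_D_h k : (k <= n)%N -> vcoef (e 0 *m D) k =
  - a1 * (k == 1%N)%:R + (if (2 <= k < n)%N then k%:R * beta k.+1 else 0)
  + beta n.+1 * (k == n)%:R.
Proof. by move=> hk; rewrite D_h !vcoefD !vcoefZ vcoef_sum_ev // !vcoef_ev. Qed.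

Lemma vcoef_D_e1 k : (k <= n)%N -> vcoef (e 1 *m D) k =
  a2 * (k == 1%N)%:R - a1 * (k == 2%N)%:R + (if (3 <= k < n.+1)%N then beta k else 0).
Proof. by move=> hk; rewrite D_e1 !vcoefD vcoefN !vcoefZ vcoef_sum_ev // !vcoef_ev. Qed.

Lemma D_e1_Rh : e 1 *m D = e 1 *m D *m Rh - e 0 *m D *m Re1.
Proof.
apply: eq_row_vcoef => k hk; rewrite vcoefB vcoef_Rh // vcoef_Re1 // vcoef_D_e1 //.
case: k hk => [|[|[|m]]] hk /=; rewrite ?natr_false ?natr_true.
- ring.
- rewrite vcoef_D_h //= (_ : (0 == n) = false) ?natr_false ?natr_true; [ring | lia].
- rewrite vcoef_D_h //= (_ : (1 == n) = false) ?natr_false ?natr_true; [ring | lia].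
- have -> : (m.+3 < n.+1)%N by lia.
  rewrite vcoef_D_h; last by lia.
  have -> : (2 <= m.+2 < n)%N by lia.
  have -> : (m.+2 == n) = false by lia.
  by rewrite /= ?natr_false ?natr_true -(natr1 (R:=C) m.+2); ring.
Qed.

Lemma Rh_D : Rh *m D = D *m Rh - ev_outer 0 (e 0 *m D *m Rh) - ev_outer 1 (e 0 *m D *m Re1).
Proof.
apply: eq_mx_ev => p hp.
rewrite !mulmxBr !mul_ev_outer // mulmxA ev_Rh -scalemxAl mulmxA !vcoef_ev0 !vcoef_ev1.
case: p hp => [|[|p]] hp /=; rewrite ?natr_false ?natr_true.
- solve_coordwise.
- rewrite {1}D_e1_Rh; solve_coordwise.
- rewrite D_high_all // mul0mx; solve_coordwise.
Qed.

Lemma Re1_D : Re1 *m D = D *m Re1 - ev_outer 0 (e 1 *m D *m Rh) - ev_outer 1 (e 1 *m D *m Re1).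
Proof.
apply: eq_mx_ev => p hp.
rewrite !mulmxBr !mul_ev_outer // mulmxA ev_Re1 mulmxA !vcoef_ev0 !vcoef_ev1.
case: p hp => [|[|p]] hp /=; rewrite ?natr_false ?natr_true.
- rewrite mulNmx {1}D_e1_Rh; solve_coordwise.
- rewrite D_high_all //; solve_coordwise.
- rewrite (D_high_all p.+3) // (D_high_all p.+2) // mul0mx; solve_coordwise.
Qed.

Lemma d_Rh : d *m Rh = Rh *m d + a1 *: Re1.
Proof.
apply: eq_mx_ev => p hp.
rewrite mulmxDr !mulmxA ev_Rh -scalemxAl -scalemxAr.
case: p hp => [|p] hp.
- rewrite ev0_Re1 d_h -scalemxAl ev_Rh; solve_coordwise.
- rewrite evS_Re1 d_e_all // mulmxDl -!scalemxAl !ev_Rh -(natr1 (R:=C) p.+1); solve_coordwise.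
Qed.

Lemma d_Re1 : d *m Re1 = Re1 *m d - a2 *: Re1.
Proof.
apply: eq_mx_ev => p hp.
rewrite mulmxBr !mulmxA -scalemxAr.
case: p hp => [|p] hp.
- rewrite !ev0_Re1 d_h -[(- a1 *: e 1) *m Re1]scalemxAl evS_Re1 mulNmx [e 1 *m d]d_e_all //.
  solve_coordwise.
- rewrite !evS_Re1 [e p.+1 *m d]d_e_all // [e p.+2 *m d]d_e_all // mulmxDl.
  rewrite -[(_ *: e p.+1) *m Re1]scalemxAl -[(a1 *: e p.+2) *m Re1]scalemxAl !evS_Re1.
  rewrite -(natr1 (R:=C) p.+1); solve_coordwise.
Qed.

Lemma vcoef_mul_d_h (y : V) : vcoef (y *m d) 0 = 0.
Proof.
rewrite (@vcoef_mul_col01 y d 0 0 0) ?mulr0 ?addr0 // => j hj.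
rewrite !mulr0 addr0; case: j hj => [|j] hj; first by rewrite d_h vcoefZ vcoef_ev // mulr0.
by rewrite d_e_all // vcoefD !vcoefZ !vcoef_ev // !natr_false !mulr0 addr0.
Qed.

Lemma vcoef_mul_d_e1 (y : V) : vcoef (y *m d) 1 = vcoef y 0 * - a1 + vcoef y 1 * a2.
Proof.
apply: vcoef_mul_col01 => // j hj.
by case: j hj => [|[|j]] hj; rewrite ?d_h ?d_e_all // ?vcoefD ?vcoefZ !vcoef_ev //=;
  rewrite ?natr_false ?natr_true; ring.
Qed.

Lemma vcoef_mul_D_h (y : V) : vcoef (y *m D) 0 = 0.
Proof.
rewrite (@vcoef_mul_col01 y D 0 0 0) ?mulr0 ?addr0 // => j hj.
rewrite !mulr0 addr0; case: j hj => [|[|j]] hj.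
- by rewrite vcoef_D_h //= (_ : (0 == n) = false) ?natr_false ?mulr0 ?addr0 //; lia.
- by rewrite vcoef_D_e1 //= ?natr_false !mulr0 subr0 addr0.
- by rewrite D_high_all // vcoef0.
Qed.

Lemma vcoef_mul_D_e1 (y : V) : vcoef (y *m D) 1 = vcoef y 0 * - a1 + vcoef y 1 * a2.
Proof.
apply: vcoef_mul_col01 => // j hj.
case: j hj => [|[|j]] hj.
- rewrite vcoef_D_h //= (_ : (1 == n) = false) ?natr_false ?natr_true; [ring | lia].
- by rewrite vcoef_D_e1 //= ?natr_false ?natr_true; ring.
- by rewrite D_high_all // vcoef0 /= ?natr_false; ring.
Qed.

Lemma mul_D (y : V) : y *m D = vcoef y 0 *: (e 0 *m D) + vcoef y 1 *: (e 1 *m D).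
Proof.
apply: eq_row_vcoef => k hk; rewrite vcoefD !vcoefZ; apply: vcoef_mul_col01 => // j hj.
case: j hj => [|[|j]] hj /=; rewrite ?natr_false ?natr_true; try ring.
by rewrite D_high_all // vcoef0; ring.
Qed.

Lemma shape_derivation : is_derivation d.
Proof.
move=> x y; rewrite !bracketE vcoef_mul_d_h vcoef_mul_d_e1 scale0r add0r.
rewrite mulmxDl -!scalemxAl -!mulmxA d_Rh d_Re1 mulmxDr mulmxBr -!scalemxAr.
solve_coordwise.
Qed.

Lemma shape_antiderivation : is_antiderivation D.
Proof.
move=> x y; rewrite !bracketE (mul_D y) mulmxDl !mulmxDl -!scalemxAl -!mulmxA.
rewrite Rh_D Re1_D !mulmxBr !mul_ev_outer // -!mulmxA.
solve_coordwise.
Qed.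

Lemma shape_biderivation : is_biderivation d D.
Proof.
split; [exact: shape_derivation | exact: shape_antiderivation |].
by move=> x y; rewrite !bracketE vcoef_mul_d_h vcoef_mul_D_h vcoef_mul_d_e1 vcoef_mul_D_e1.
Qed.

End Sufficiency.
End Biderivations.

Theorem mainTheorem8 (R : realType) (n : nat) (hn : (2 <= n)%N)
    (d D : 'M[R[i]]_(n.+1)) :
  is_biderivation d D <->
  exists (a1 a2 : R[i]) (beta : nat -> R[i]),
    [/\ ev _ n 0 *m d = - a1 *: ev _ n 1,
        (forall i : nat, (1 <= i <= n)%N ->
           ev _ n i *m d = (i%:R * a2) *: ev _ n i + a1 *: ev _ n i.+1),
        ev _ n 0 *m D = - a1 *: ev _ n 1
                        + \sum_(2 <= i < n) (i%:R * beta i.+1) *: ev _ n i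
                        + beta n.+1 *: ev _ n n,
        ev _ n 1 *m D = a2 *: ev _ n 1 - a1 *: ev _ n 2
                        + \sum_(3 <= i < n.+1) beta i *: ev _ n i
      & (forall i : nat, (2 <= i <= n)%N -> ev _ n i *m D = 0)].
Proof.
split; first exact: biderivation_shape.
case=> a1 [a2] [beta] [d_h d_e D_h D_e1 D_high].
exact: shape_biderivation d_h d_e D_h D_e1 D_high.
Qed.
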